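(* Let $r\in\{1,\infty\}$ and $N\in\{0,2,3,\ldots\}$. Every separable metric space of diameter no greater than $r$ admits an isometric embedding into the metric space $\mathbb{G}_r(N)$ (with metric $(x,y)\mapsto p(x-y)$, $p$ its value).
   Context: All groups are Abelian. A value on $G$ is $p\colon G\to[0,\infty)$ with $p(x)=0\iff x=0$, $p(-x)=p(x)$, $p(x+y)\leqslant p(x)+p(y)$. Class $\mathcal{O}_0$: $\lim_n p(na)/n=0$ for all $a$. $\mathfrak{G}_r(N)$: separable valued Abelian groups of class $\mathcal{O}_0$ with $p\leqslant r$ (vacuous if $r=\infty$) and of exponent $N$ if $N\neq0$. $\mathbb{G}_r(N)$ is the valued Abelian group, unique up to isometric group isomorphism, which (G1) is complete and in $\mathfrak{G}_r(N)$; (G2) for every finite valued Abelian group $(H,+,q)$ (of exponent $N$ if $N\neq0$) with $q\leqslant r$, subgroup $K$, isometric homomorphism $\varphi\colon K\to\mathbb{G}_r(N)$ and $\varepsilon\in(0,1)$, there is a homomorphism $\varphi_\varepsilon\colon H\to\mathbb{G}_r(N)$ with $p(\varphi(x)-\varphi_\varepsilon(x))\leqslant\varepsilon$ on $K$ and $(1-\varepsilon)q\leqslant p\circ\varphi_\varepsilon\leqslant(1+\varepsilon)q$ on $H$; (G3) if $N=0$, finite-order elements are dense. *)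

From HB Require Import structures.
From mathcomp Require Import all_boot all_order all_algebra.
From mathcomp Require Import all_classical all_reals all_analysis.
Set Implicit Arguments. Unset Strict Implicit. Unset Printing Implicit Defensive.
Import Order.TTheory GRing.Theory Num.Theory.
Import numFieldNormedType.Exports.
Local Open Scope classical_set_scope.
Local Open Scope ring_scope.

Definition is_value (R : realType) (G : zmodType) (p : G -> R) : Prop :=
  (forall x, 0 <= p x) /\
  (forall x, p x = 0 <-> x = 0) /\
  (forall x, p (- x) = p x) /\
  (forall x y, p (x + y) <= p x + p y).

Definition class_O0 (R : realType) (G : zmodType) (p : G -> R) : Prop :=
  forall a : G, (fun n : nat => p (a *+ n) / n%:R) @ \oo --> (0 : R^o).

Definition bounded_by (R : realType) (G : zmodType) (p : G -> R) (r : \bar R) : Prop :=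
  forall x, ((p x)%:E <= r)%E.

Definition exponent_cond (G : zmodType) (N : nat) : Prop :=
  (N != 0)%N -> forall x : G, x *+ N = 0.

Definition separable_value (R : realType) (G : zmodType) (p : G -> R) : Prop :=
  exists D : set G, countable D /\
    forall x e, 0 < e -> exists y, D y /\ p (x - y) < e.

Definition complete_value (R : realType) (G : zmodType) (p : G -> R) : Prop :=
  forall u : nat -> G,
    (forall e, 0 < e -> exists M, forall m n, (M <= m)%N -> (M <= n)%N ->
        p (u m - u n) < e) ->
    exists l : G, forall e, 0 < e -> exists M, forall n, (M <= n)%N ->
        p (u n - l) < e.

Definition in_frakG (R : realType) (r : \bar R) (N : nat) (G : zmodType)
    (p : G -> R) : Prop :=
  is_value p /\ separable_value p /\ class_O0 p /\ bounded_by p r /\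
  exponent_cond G N.

Definition is_subgroup (H : finZmodType) (K : {set H}) : Prop :=
  0 \in K /\ (forall x y, x \in K -> y \in K -> x - y \in K).

Definition G2_property (R : realType) (r : \bar R) (N : nat) (G : zmodType)
    (p : G -> R) : Prop :=
  forall (H : finZmodType) (q : H -> R) (K : {set H}) (phi : H -> G) (eps : R),
    is_value q -> bounded_by q r -> exponent_cond H N ->
    is_subgroup K ->
    (forall x y, x \in K -> y \in K -> phi (x - y) = phi x - phi y) ->
    (forall x, x \in K -> p (phi x) = q x) ->
    0 < eps < 1 ->
    exists phie : H -> G,
      (forall x y, phie (x - y) = phie x - phie y) /\
      (forall x, x \in K -> p (phi x - phie x) <= eps) /\
      (forall x, (1 - eps) * q x <= p (phie x) <= (1 + eps) * q x).

Definition G3_property (R : realType) (N : nat) (G : zmodType) (p : G -> R) : Prop :=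
  N = 0%N -> forall x e, 0 < e ->
    exists y : G, (exists k, (0 < k)%N /\ y *+ k = 0) /\ p (x - y) < e.

(** (G,p) satisfies the characterization (G1)-(G3) of the group G_r(N). *)
Definition is_Gr (R : realType) (r : \bar R) (N : nat) (G : zmodType)
    (p : G -> R) : Prop :=
  (complete_value p /\ in_frakG r N p) /\ G2_property r N p /\ G3_property N p.

Definition is_metric (R : realType) (X : Type) (d : X -> X -> R) : Prop :=
  (forall x y, 0 <= d x y) /\
  (forall x y, d x y = 0 <-> x = y) /\
  (forall x y, d x y = d y x) /\
  (forall x y z, d x z <= d x y + d y z).

Definition separable_metric (R : realType) (X : Type) (d : X -> X -> R) : Prop :=
  exists D : set X, countable D /\
    forall x e, 0 < e -> exists y, D y /\ d x y < e.

(* A complete value group with the approximate extension property (G2) absorbs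
   finite configurations, so it suffices to embed a dense sequence (e_k) of the
   space.  The points e_0, ..., e_n are realized isometrically in the finite group
   (Z/m)^n: a point is coded by its Frechet coordinates d(., e_k) - d(e_0, e_k),
   each written as the Z/m-valued step function of a real variable that jumps at
   that coordinate, and the value of an element is the supremum over k of the
   Lebesgue measure of the support of its k-th step function (truncated at r).
   Applying (G2) to the amalgam of consecutive groups of this tower produces
   approximately isometric homomorphisms psi_n with errors 2^-(n+1), under which
   the image of each point moves by a summable amount; the limits of these images
   realize the distances exactly, and completeness extends the embedding from the
   dense sequence to the whole space. *)

From HB Require Import structures.
From mathcomp Require Import all_boot all_order all_algebra.
From mathcomp Require Import all_classical all_reals all_analysis.
From mathcomp Require Import ring lra zify.
Set Implicit Arguments. Unset Strict Implicit. Unset Printing Implicit Defensive.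
Import Order.TTheory GRing.Theory Num.Theory.
Import numFieldNormedType.Exports.
Local Open Scope ring_scope.

Section ValueTheory.
Variables (R : realType) (G : zmodType) (p : G -> R).
Hypothesis pv : is_value p.

Lemma value_ge0 x : 0 <= p x. Proof. by case: pv. Qed.
Lemma value0 : p 0 = 0. Proof. by case: pv => _ [h _]; apply/(h 0). Qed.
Lemma value_eq0 x : p x = 0 -> x = 0. Proof. by case: pv => _ [h _]; exact: (proj1 (h x)). Qed.
Lemma valueN x : p (- x) = p x. Proof. by case: pv => _ [_ [h _]]. Qed.
Lemma valueD x y : p (x + y) <= p x + p y. Proof. by case: pv => _ [_ [_ h]]. Qed.

Lemma value_distC x y : p (x - y) = p (y - x).
Proof. by rewrite -valueN opprB. Qed.

Lemma value_dist_triangle x y z : p (x - z) <= p (x - y) + p (y - z).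
Proof. by have := valueD (x - y) (y - z); rewrite addrA subrK. Qed.

Lemma value_lipschitz x y : `|p x - p y| <= p (x - y).
Proof.
rewrite ler_norml; have h1 := valueD (y - x) x; have h2 := valueD (x - y) y.
rewrite !subrK value_distC in h1 h2; apply/andP; split; lra.
Qed.

Lemma value_dist_approx (a b : G) (D : R) :
  (forall eps, 0 < eps -> exists x y,
     [/\ p (x - a) < eps, p (y - b) < eps & `|p (x - y) - D| < eps]) ->
  p (a - b) = D.
Proof.
move=> approx; apply/eqP; rewrite -subr_eq0 -normr_le0.
apply/ler_addgt0Pr => eps eps0; rewrite add0r.
have [x [y [xa yb]]] := approx (eps / 3) (divr_gt0 eps0 (ltr0n R 3)).
rewrite ltr_norml => /andP[xyD1 xyD2].
have ab_xy : a - b - (x - y) = (a - x) + (y - b).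
  by rewrite opprB !addrA [a - b + y]addrAC [a - x + y]addrAC [LHS]addrAC.
have := value_lipschitz (a - b) (x - y); rewrite ab_xy ler_norml => /andP[ab1 ab2].
have := valueD (a - x) (y - b); rewrite [p (a - x)]value_distC => ab.
rewrite ler_norml; apply/andP; split; lra.
Qed.

Definition cvg_value (w : nat -> G) (l : G) :=
  forall eps, 0 < eps -> exists M, forall n, (M <= n)%N -> p (w n - l) < eps.

End ValueTheory.

Section HalfPow.
Variable R : realType.

Lemma halfpow_gt0 n : 0 < 2 ^- n :> R.
Proof. by rewrite invr_gt0 exprn_gt0. Qed.

Lemma halfpowS n : 2 ^- n.+1 = 2 ^- n / 2 :> R.
Proof. by rewrite exprS invfM mulrC. Qed.

Lemma halfpow_le1 n : 2 ^- n <= 1 :> R.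
Proof. by rewrite invf_le1 ?exprn_gt0 // exprn_ege1 // ler1n. Qed.

Lemma halfpow_le n m : (n <= m)%N -> 2 ^- m <= 2 ^- n :> R.
Proof. by move=> nm; rewrite lef_pV2 ?posrE ?exprn_gt0 // ler_weXn2l // ler1n. Qed.

Lemma halfpow_small (eps : R) : 0 < eps -> exists M, forall n, (M <= n)%N -> 2 ^- n < eps.
Proof.
move=> eps0; set M := Num.Def.archi_bound (eps^-1).
have hM : eps^-1 < M%:R by apply: archi_boundP; rewrite invr_ge0 ltW.
exists M => n Mn; rewrite -(invrK eps) ltf_pV2 ?posrE ?exprn_gt0 ?invr_gt0 //.
apply: (lt_le_trans hM); apply: (@le_trans _ _ n.+1%:R); first by rewrite ler_nat leqW.
by rewrite -natrX ler_nat ltn_expl.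
Qed.

End HalfPow.

Section Completeness.
Variables (R : realType) (G : zmodType) (p : G -> R).
Hypotheses (pv : is_value p) (hcomp : complete_value p).

Lemma value_telescope_halfpow (w : nat -> G) (C : R) :
  (forall k, p (w k.+1 - w k) <= C * 2 ^- k.+1) ->
  forall n m, (n <= m)%N -> p (w m - w n) <= C * (2 ^- n - 2 ^- m).
Proof.
move=> step n m /subnK <-; elim: (m - n)%N => [|k IH].
  by rewrite add0n subrr value0 // subrr mulr0.
rewrite addSn; apply: (le_trans (value_dist_triangle pv _ (w (k + n)%N) _)).
have := step (k + n)%N; rewrite !halfpowS; lra.
Qed.

Lemma cvg_value_halfpow (w : nat -> G) (C : R) : 0 < C ->
  (forall n m, (n <= m)%N -> p (w m - w n) <= C * 2 ^- n) -> exists l, cvg_value p w l.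
Proof.
move=> C0 wC; apply: hcomp => eps eps0.
have [M hM] := halfpow_small (divr_gt0 eps0 C0).
exists M => m n Mm Mn.
wlog nm : m n Mm Mn / (n <= m)%N.
  move=> hwlog; case: (leqP n m) => [nm|/ltnW mn]; first exact: hwlog.
  by rewrite value_distC //; apply: hwlog.
apply: (le_lt_trans (wC _ _ nm)); rewrite mulrC -ltr_pdivlMr //; exact: hM.
Qed.

End Completeness.

Section Truncation.
Variable R : realType.

Definition truncr (r : \bar R) (x : R) : R := if r is EFin c then Num.min c x else x.

Lemma truncr_id (r : \bar R) x : (x%:E <= r)%E -> truncr r x = x.
Proof. by case: r => //= c; rewrite lee_fin => xc; rewrite /Num.min ltNge xc. Qed.

Lemma truncr_le (r : \bar R) x : truncr r x <= x.
Proof. by case: r => //= c; rewrite ge_min lexx orbT. Qed.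

Lemma truncr_bound (r : \bar R) x : r != -oo%E -> ((truncr r x)%:E <= r)%E.
Proof. by case: r => //= [c|] _; rewrite ?leey // lee_fin ge_min lexx. Qed.

Lemma truncr_value (r : \bar R) (G : zmodType) (q : G -> R) :
  (0 < r)%E -> is_value q -> is_value (fun x => truncr r (q x)).
Proof.
case: r => //= c; rewrite lte_fin => c0 qv.
split; [|split; [|split]] => /=.
- by move=> x; rewrite le_min (ltW c0) value_ge0.
- move=> x; split; last by move=> ->; rewrite value0 // /Num.min ltNge (ltW c0).
  move=> h; apply: (value_eq0 qv); move: h; rewrite /Num.min.
  by case: ltP => // _ c_eq0; move: c0; rewrite c_eq0 ltxx.
- by move=> x; rewrite valueN.
- move=> x y; have h := valueD qv x y; have hx := value_ge0 qv x; have hy := value_ge0 qv y.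
  rewrite /Num.min; case: (ltP c (q (x + y))); case: (ltP c (q x)); case: (ltP c (q y)); lra.
Qed.

End Truncation.

Section SubMorphism.
Variables (U W : zmodType) (f : U -> W).
Hypothesis fB : {morph f : x y / x - y}.

Lemma sub_morph0 : f 0 = 0.
Proof. by rewrite -(subrr 0) fB subrr. Qed.

Lemma sub_morphN x : f (- x) = - f x.
Proof. by rewrite -sub0r fB sub_morph0 sub0r. Qed.

Lemma sub_morphD x y : f (x + y) = f x + f y.
Proof. by rewrite -{1}(opprK y) fB sub_morphN opprK. Qed.

End SubMorphism.

Definition finprod (A B : finZmodType) := (A * B)%type.
HB.instance Definition _ (A B : finZmodType) := GRing.Zmodule.on (finprod A B).
HB.instance Definition _ (A B : finZmodType) := Finite.on (finprod A B).

Lemma pair_mulrn (A B : zmodType) (x : A) (y : B) n :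
  ((x, y) : (A * B)%type) *+ n = (x *+ n, y *+ n).
Proof. by elim: n => // n IH; rewrite !mulrS IH. Qed.

Section Amalgamation.
Variables (R : realType) (r : \bar R) (N : nat) (G : zmodType) (p : G -> R).
Hypotheses (r_gt0 : (0 < r)%E) (pv : is_value p) (pr : bounded_by p r)
  (pG2 : G2_property r N p).
Variables (A B : finZmodType) (VA : A -> R) (VB : B -> R) (iota : A -> B)
  (psi : A -> G) (e e' : R).
Hypotheses (VAv : is_value VA) (VBv : is_value VB) (VBr : bounded_by VB r)
  (expA : exponent_cond A N) (expB : exponent_cond B N)
  (iotaB : {morph iota : x y / x - y}) (iotaV : forall z, VB (iota z) = VA z)
  (psiB : {morph psi : x y / x - y})
  (psiV : forall x, (1 - e) * VA x <= p (psi x) <= (1 + e) * VA x)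
  (e01 : 0 < e < 1) (e'01 : 0 < e' < 1).

Let cost (u : finprod A B) (z : A) :=
  p (psi (u.1 - z)) + VB (u.2 + iota z) + e * VA z.

(* The path metric of [A] and [B] glued along [iota] by a bridge of length
   [e * VA a] between [(a, 0)] and [(0, iota a)]. *)
Let amalg (u : finprod A B) := cost u (Order.arg_min 0 xpredT (cost u)).

Let amalg_le u z : amalg u <= cost u z.
Proof. by rewrite /amalg; case: (arg_minP (cost u) (isT : xpredT 0)) => z' _ /(_ z isT). Qed.

Let amalg_min u : exists z, amalg u = cost u z.
Proof. by exists (Order.arg_min 0 xpredT (cost u)). Qed.

Let cost_ge0 u z : 0 <= cost u z.
Proof.
have := value_ge0 pv (psi (u.1 - z)); have := value_ge0 VBv (u.2 + iota z).
have := value_ge0 VAv z; case/andP: e01 => e0 _ h1 h2 h3.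
by rewrite !addr_ge0 // mulr_ge0 // ltW.
Qed.

Let amalg_eq0 u : amalg u = 0 -> u = 0.
Proof.
have [z ->] := amalg_min u; rewrite /cost => cost0.
have h1 := value_ge0 pv (psi (u.1 - z)); have h2 := value_ge0 VBv (u.2 + iota z).
have h3 : 0 <= e * VA z by rewrite mulr_ge0 ?value_ge0 // ltW //; case/andP: e01.
have /eqP : e * VA z = 0 by lra.
rewrite mulf_eq0 gt_eqF /=; last by case/andP: e01.
move/eqP/(value_eq0 VAv) => z0; subst z.
rewrite subr0 (sub_morph0 iotaB) addr0 in cost0 h1 h2.
have u1psi : p (psi u.1) = 0 by lra.
have u2 : u.2 = 0 by apply: (value_eq0 VBv); lra.
have u1 : u.1 = 0.
  apply: (value_eq0 VAv); apply/le_anti; rewrite value_ge0 // andbT.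
  have /andP[+ _] := psiV u.1; rewrite u1psi pmulr_rle0 // subr_gt0.
  by case/andP: e01.
by case: u u1 u2 {cost0 u1psi h1 h2} => x y /= -> ->.
Qed.

Let amalg_value : is_value amalg.
Proof.
split; [|split; [|split]].
- by move=> u; have [z ->] := amalg_min u; exact: cost_ge0.
- move=> u; split; first exact: amalg_eq0.
  move=> ->; apply/le_anti/andP; split; last by have [z ->] := amalg_min 0; exact: cost_ge0.
  apply: (le_trans (amalg_le 0 0)); rewrite /cost /= subr0 (sub_morph0 iotaB).
  by rewrite addr0 (sub_morph0 psiB) (value0 pv) (value0 VBv) (value0 VAv) mulr0 !addr0.
- suff amalgN u : amalg (- u) <= amalg u.
    by move=> u; apply/le_anti; rewrite amalgN -{1}(opprK u) amalgN.
  have [z ->] := amalg_min u; apply: (le_trans (amalg_le _ (- z))); rewrite /cost /=.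
  by rewrite -opprD (sub_morphN psiB) valueN // (sub_morphN iotaB) -opprD !valueN.
- move=> u v; have [z1 ->] := amalg_min u; have [z2 ->] := amalg_min v.
  apply: (le_trans (amalg_le _ (z1 + z2))); rewrite /cost /=.
  have a1 := valueD pv (psi (u.1 - z1)) (psi (v.1 - z2)).
  have a2 := valueD VBv (u.2 + iota z1) (v.2 + iota z2).
  have a3 : e * VA (z1 + z2) <= e * VA z1 + e * VA z2.
    by rewrite -mulrDr ler_wpM2l ?valueD // ltW //; case/andP: e01.
  rewrite -(sub_morphD psiB) addrACA -opprD in a1.
  rewrite addrACA -(sub_morphD iotaB) in a2.
  lra.
Qed.

Let amalg_left a : amalg (a, 0) = p (psi a).
Proof.
apply/le_anti/andP; split.
  apply: (le_trans (amalg_le _ 0)); rewrite /cost /= subr0 (sub_morph0 iotaB) addr0.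
  by rewrite (value0 VBv) (value0 VAv) mulr0 !addr0.
have [z ->] := amalg_min (a, 0); rewrite /cost /= add0r iotaV.
have := valueD pv (psi (a - z)) (psi z); rewrite -(sub_morphD psiB) subrK.
have /andP[_ ] := psiV z; lra.
Qed.

Let amalg_right b : amalg (0, b) = VB b.
Proof.
apply/le_anti/andP; split.
  apply: (le_trans (amalg_le _ 0)); rewrite /cost /= subr0 (sub_morph0 iotaB) addr0.
  by rewrite (sub_morph0 psiB) (value0 pv) (value0 VAv) mulr0 add0r addr0.
have [z ->] := amalg_min (0, b); rewrite /cost /= sub0r (sub_morphN psiB) valueN //.
have := valueD VBv (b + iota z) (- iota z); rewrite addrK valueN // iotaV.
have /andP[+ _] := psiV z; lra.
Qed.

Let amalg_glue a : amalg ((0, iota a) - (a, 0)) <= e * VA a.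
Proof.
apply: (le_trans (amalg_le _ (- a))); rewrite /cost /= sub0r opprK addNr.
rewrite (sub_morphN iotaB) subr0 addrN (sub_morph0 psiB) (value0 pv) (value0 VBv).
by rewrite valueN // !add0r.
Qed.

Lemma approx_hom_amalgamation : exists psi' : B -> G,
  [/\ {morph psi' : x y / x - y},
      (forall y, (1 - e') * VB y <= p (psi' y) <= (1 + e') * VB y) &
      (forall z, p (psi' (iota z) - psi z) <= (1 + e') * (e * VA z) + e')].
Proof.
pose Q u := truncr r (amalg u).
have Qv : is_value Q := truncr_value r_gt0 amalg_value.
have Qr : bounded_by Q r by move=> u; apply: truncr_bound; case: r r_gt0.
have expAB : exponent_cond (finprod A B) N.
  by move=> N0 [x y]; rewrite pair_mulrn expA // expB.
pose K := [set u : finprod A B | u.2 == 0].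
have Ksub : is_subgroup K.
  split=> [|x y]; rewrite !inE // => /eqP x2 /eqP y2.
  by rewrite -[(x - y).2]/(x.2 - y.2) x2 y2 subrr.
pose phi (u : finprod A B) := psi u.1.
have phiB x y : x \in K -> y \in K -> phi (x - y) = phi x - phi y.
  by move=> _ _; exact: psiB.
have phiV x : x \in K -> p (phi x) = Q x.
  rewrite inE; case: x => a _ /= /eqP ->.
  by rewrite /Q amalg_left truncr_id.
have [phie [phieB [phieK phieV]]] := pG2 Qv Qr expAB Ksub phiB phiV e'01.
exists (fun y => phie (0, y)); split.
- by move=> x y; rewrite -phieB -[in LHS](subrr (0 : A)).
- by move=> y; have := phieV (0, y); rewrite /Q amalg_right truncr_id.
- move=> z; apply: (le_trans (value_dist_triangle pv _ (phie (z, 0)) _)).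
  have near_psi : p (phie (z, 0) - psi z) <= e'.
    by rewrite value_distC //; apply: (phieK (z, 0)); rewrite inE.
  have near_iota : p (phie (0, iota z) - phie (z, 0)) <= (1 + e') * (e * VA z).
    rewrite -phieB; have /andP[_ +] := phieV ((0, iota z) - (z, 0)).
    move/le_trans; apply; rewrite ler_wpM2l //; first by case/andP: e'01 => ? ?; lra.
    exact: le_trans (truncr_le _ _) (amalg_glue z).
  lra.
Qed.

End Amalgamation.

Unset Implicit Arguments.
Section TowerEmbedding.
Variables (R : realType) (r : \bar R) (N : nat) (G : zmodType) (p : G -> R).
Hypotheses (r_gt0 : (0 < r)%E) (pv : is_value p) (pr : bounded_by p r)
  (pG2 : G2_property r N p) (pcomp : complete_value p).
Variables (F : nat -> finZmodType) (V : forall n, F n -> R)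
  (incl : forall n, F n -> F n.+1) (pt : forall n, nat -> F n) (D : nat -> nat -> R).
Hypotheses (Vv : forall n, is_value (V n)) (Vr : forall n, bounded_by (V n) r)
  (Fexp : forall n, exponent_cond (F n) N)
  (inclB : forall n, {morph incl n : x y / x - y})
  (inclV : forall n z, V n.+1 (incl n z) = V n z)
  (pt_incl : forall n i, (i <= n)%N -> incl n (pt n i) = pt n.+1 i)
  (pt0 : forall n, pt n 0 = 0)
  (ptD : forall n i j, (i <= n)%N -> (j <= n)%N -> V n (pt n i - pt n j) = D i j).

Let err n : R := 2 ^- n.+1.

Let approx_hom n (psi : F n -> G) := {morph psi : x y / x - y} /\
  forall x, (1 - err n) * V n x <= p (psi x) <= (1 + err n) * V n x.

Let err01 n : 0 < err n < 1.
Proof.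
rewrite /err halfpow_gt0 /= halfpowS.
by have := halfpow_le1 R n; have := halfpow_gt0 R n; lra.
Qed.

Let D_ge0 i j : 0 <= D i j.
Proof. by rewrite -(ptD (i + j) i j) ?leq_addr ?leq_addl // value_ge0. Qed.

Let approx_hom0 : exists psi, approx_hom 0 psi.
Proof.
have K0 : is_subgroup [set 0 : F 0].
  by split=> [|x y]; rewrite !inE // => /eqP -> /eqP ->; rewrite subrr.
have zeroB (x y : F 0) : x \in [set 0] -> y \in [set 0] -> (0 : G) = 0 - 0.
  by rewrite subrr.
have zeroV (x : F 0) : x \in [set 0] -> p 0 = V 0 x.
  by rewrite inE => /eqP ->; rewrite (value0 pv) (value0 (Vv 0)).
have [psi [psiB [_ psiV]]] := pG2 _ _ _ _ _ (Vv 0) (Vr 0) (Fexp 0) K0 zeroB zeroV (err01 0).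
by exists psi.
Qed.

Let approx_hom_seq : exists psi : forall n, F n -> G,
  (forall n, approx_hom n (psi n)) /\
  forall n z, p (psi n.+1 (incl n z) - psi n z) <= (1 + err n.+1) * (err n * V n z) + err n.+1.
Proof.
have step n (psi : {psi | approx_hom n psi}) : {psi' | approx_hom n.+1 psi' /\
    forall z, p (psi' (incl n z) - sval psi z) <= (1 + err n.+1) * (err n * V n z) + err n.+1}.
  apply: cid; case: psi => psi [psiB psiV] /=.
  have [psi' [psi'B psi'V psi'near]] := approx_hom_amalgamation r_gt0 pv pr pG2 (Vv n)
    (Vv n.+1) (Vr n.+1) (Fexp n) (Fexp n.+1) (inclB n) (inclV n) psiB psiV (err01 n) (err01 n.+1).
  by exists psi'.
pose S := fix S n : {psi | approx_hom n psi} := match n with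
  | 0 => cid approx_hom0
  | k.+1 => exist _ (sval (step k (S k))) (proj1 (svalP (step k (S k)))) end.
exists (fun n => sval (S n)); split=> [n|n z]; first exact: svalP.
exact: (proj2 (svalP (step n (S n))) z).
Qed.

Let approx_point_dist n psi i j : approx_hom n psi -> (i <= n)%N -> (j <= n)%N ->
  `|p (psi (pt n i) - psi (pt n j)) - D i j| <= err n * D i j.
Proof.
move=> [psiB psiV] i_le j_le; rewrite -psiB.
have /andP[lo hi] := psiV (pt n i - pt n j); rewrite ptD // in lo hi.
by rewrite ler_norml; apply/andP; split; lra.
Qed.

Let point_drift (psi : forall n, F n -> G) :
  (forall n z, p (psi n.+1 (incl n z) - psi n z) <= (1 + err n.+1) * (err n * V n z) + err n.+1) ->
  forall i k, p (psi (k + i).+1 (pt _ i) - psi (k + i)%N (pt _ i)) <= (2 * D i 0 + 1) * 2 ^- k.+1.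
Proof.
move=> psi_near i k; rewrite -pt_incl ?leq_addl //; apply: (le_trans (psi_near _ _)).
rewrite -[pt _ i]subr0 -(pt0 (k + i)) ptD ?leq_addl //.
have e1 : err (k + i).+1 <= err (k + i) by apply: halfpow_le.
have e2 : err (k + i) <= 2 ^- k.+1 by apply: halfpow_le; rewrite ltnS leq_addr.
have D0 := D_ge0 i 0; have /andP[e0 _] := err01 (k + i).
have /andP[_ e'1] := err01 (k + i).+1.
have : (1 + err (k + i).+1) * (err (k + i) * D i 0) <= 2 * (err (k + i) * D i 0).
  rewrite ler_wpM2r //; [by rewrite mulr_ge0 // ltW | lra].
have : err (k + i) * D i 0 <= 2 ^- k.+1 * D i 0 by rewrite ler_wpM2r.
lra.
Qed.

Lemma tower_embedding : exists gam : nat -> G, forall i j, p (gam i - gam j) = D i j.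
Proof.
have [psi [psi_hom psi_near]] := approx_hom_seq.
pose w i k := psi (k + i)%N (pt (k + i) i).
have w_cvg i : exists l, cvg_value p (w i) l.
  have D0 := D_ge0 i 0.
  apply: (cvg_value_halfpow pv pcomp (C := 2 * D i 0 + 1)); first lra.
  move=> n m nm; apply: le_trans (value_telescope_halfpow pv _ nm) _.
    exact: point_drift.
  by rewrite ler_wpM2l ?gerDl ?oppr_le0 ?ltW ?halfpow_gt0 //; lra.
have [gam gam_lim] := choice w_cvg.
exists gam => i j; apply: value_dist_approx => // eps eps0.
have [Mi hMi] := gam_lim i eps eps0; have [Mj hMj] := gam_lim j eps eps0.
have D0 := D_ge0 i j.
have [M hM] := halfpow_small (divr_gt0 eps0 (ltr_pwDl ltr01 D0)).
pose n := (Mi + Mj + M + i + j)%N.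
exists (psi n (pt n i)), (psi n (pt n j)); split.
- by have := hMi (n - i)%N (ltac:(rewrite /n; lia)); rewrite /w subnK //; lia.
- by have := hMj (n - j)%N (ltac:(rewrite /n; lia)); rewrite /w subnK //; lia.
- apply: le_lt_trans (approx_point_dist n (psi n) i j (psi_hom n) _ _) _; try by rewrite /n; lia.
  have := hM n (ltac:(rewrite /n; lia)); rewrite ltr_pdivlMr ?ltr_pwDl //.
  have : err n <= 2 ^- n by apply: halfpow_le.
  have := halfpow_gt0 R n; have := err01 n; nra.
Qed.

End TowerEmbedding.
Set Implicit Arguments.

Section StepSetMeasurability.
Variable R : realType.
Local Open Scope classical_set_scope.

Lemma measurable_lt_eqb (a : R) (b : bool) : measurable [set t : R | (t < a) = b].
Proof.
case: b.
  have -> : [set t : R | (t < a) = true] = `]-oo, a[%classic.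
    by rewrite set_itvNyo; apply/seteqP; split => t /= ->.
  exact: measurable_itv.
have -> : [set t : R | (t < a) = false] = `[a, +oo[%classic.
  rewrite set_itvcy; apply/seteqP; split => t /=; first by move/negbT; rewrite -leNgt.
  by rewrite leNgt => /negbTE.
exact: measurable_itv.
Qed.

Lemma measurable_ffun_lt n (u : 'I_n -> R) (P : {ffun 'I_n -> bool} -> bool -> bool) :
  measurable [set t : R | P [ffun l => t < u l] (t < 0)].
Proof.
have -> : [set t : R | P [ffun l => t < u l] (t < 0)] =
  \bigcup_(vb in [set vb : {ffun 'I_n -> bool} * bool | P vb.1 vb.2])
     ((\bigcap_(l in [set: 'I_n]) [set t : R | (t < u l) = vb.1 l]) `&`
      [set t : R | (t < 0) = vb.2]).
  apply/seteqP; split => t /=.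
    move=> Pt; exists ([ffun l => t < u l], t < 0) => //=.
    by split => // l _ /=; rewrite ffunE.
  move=> [[v b] /= Pvb [ht hb]]; rewrite hb.
  have -> : [ffun l => t < u l] = v by apply/ffunP => l; rewrite ffunE; exact: ht.
  exact: Pvb.
apply: fin_bigcup_measurable; first exact: finite_finset.
move=> vb _; apply: measurableI; last exact: measurable_lt_eqb.
apply: fin_bigcap_measurable; first exact: finite_finset.
by move=> l _; exact: measurable_lt_eqb.
Qed.

Lemma le_lebesgue_measure (A B : set R) : measurable A -> measurable B -> A `<=` B ->
  (lebesgue_measure A <= lebesgue_measure B)%E.
Proof. by move=> mA mB AB; apply: le_measure => //; rewrite inE. Qed.

End StepSetMeasurability.

Section FrechetCoding.
Variables (R : realType) (X : Type) (d : X -> X -> R) (e : nat -> X) (m : nat).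
Hypothesis hd : is_metric d.
Local Open Scope classical_set_scope.

Let d_ge0 x y : 0 <= d x y. Proof. by case: hd. Qed.
Let d_xx x : d x x = 0. Proof. by case: hd => _ [h _]; apply/(h x x). Qed.
Let d_eq0 x y : d x y = 0 -> x = y. Proof. by case: hd => _ [h _]; exact: (proj1 (h x y)). Qed.
Let d_sym x y : d x y = d y x. Proof. by case: hd => _ [_ [h _]]. Qed.
Let d_tri x y z : d x z <= d x y + d y z. Proof. by case: hd => _ [_ [_ h]]. Qed.

Definition first_occ i := ex_minn (ex_intro (fun j => `[< e j = e i >]) i (asboolT erefl)).

Lemma first_occP i : [/\ e (first_occ i) = e i, (first_occ i <= i)%N &
  forall j, e j = e i -> (first_occ i <= j)%N].
Proof.
rewrite /first_occ; case: ex_minnP => j /asboolP ej jmin; split=> // [|k ek].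
  by apply: jmin; apply/asboolP.
by apply: jmin; apply/asboolP.
Qed.

Lemma first_occ_eq i j : e i = e j -> first_occ i = first_occ j.
Proof.
move=> eij; have [ei _ mi] := first_occP i; have [ej _ mj] := first_occP j.
by apply/eqP; rewrite eqn_leq mi ?mj ?ei // ej.
Qed.

Lemma first_occ_idem i : first_occ (first_occ i) = first_occ i.
Proof. by apply: first_occ_eq; case: (first_occP i). Qed.

Lemma first_occ0 : first_occ 0 = 0%N.
Proof. by case: (first_occP 0) => _; rewrite leqn0 => /eqP. Qed.

(* Coordinate [l] of the group below stands for the point [e l.+1]; a repeated
   point uses the coordinate of its first occurrence, and [e 0] is coded by [0]. *)
Definition fresh (l : nat) := first_occ l.+1 == l.+1.

Lemma fresh_inj l l' : fresh l -> fresh l' -> e l.+1 = e l'.+1 -> l = l'.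
Proof. by move=> /eqP h /eqP h' /first_occ_eq; rewrite h h' => -[]. Qed.

Lemma fresh_neq0 l : fresh l -> e l.+1 <> e 0.
Proof. by move=> /eqP h /first_occ_eq; rewrite first_occ0 h. Qed.

Definition frechet k j := d (e j) (e k) - d (e 0) (e k).

Lemma frechet_bound k j : `|frechet k j| <= d (e j) (e 0).
Proof.
rewrite /frechet ler_norml; have h1 := d_tri (e j) (e 0) (e k).
have h2 := d_tri (e 0) (e j) (e k); rewrite (d_sym (e 0) (e j)) in h2.
apply/andP; split; lra.
Qed.

Lemma frechet_first_occ k i : frechet k (first_occ i) = frechet k i.
Proof. by rewrite /frechet; case: (first_occP i) => ->. Qed.

Lemma frechet0 k : frechet k 0 = 0. Proof. by rewrite /frechet subrr. Qed.

Definition freegrp n := {ffun 'I_n -> 'Z_m}.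
HB.instance Definition _ n := GRing.Zmodule.on (freegrp n).
HB.instance Definition _ n := Finite.on (freegrp n).

Lemma freegrpB n (c c' : freegrp n) l : (c - c') l = c l - c' l.
Proof. by rewrite !ffunE. Qed.

Definition slice n k t (c : freegrp n) : 'Z_m :=
  \sum_(l < n | fresh l && (t < frechet k l.+1)) c l -
  (if t < 0 then \sum_(l < n | fresh l) c l else 0).

Lemma sliceB n k t : {morph @slice n k t : c c' / c - c'}.
Proof.
move=> c c'; rewrite /slice.
rewrite (eq_bigr (fun l => c l - c' l)) => [|l _]; last by rewrite !ffunE.
rewrite sumrB [X in (if _ then X else _)](eq_bigr (fun l => c l - c' l)) => [|l _].
  by rewrite sumrB; case: (t < 0); ring.
by rewrite !ffunE.
Qed.

Definition slice_support n k (c : freegrp n) := [set t : R | slice k t c != 0].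

Lemma measurable_slice_support n k (c : freegrp n) : measurable (slice_support k c).
Proof.
pose P (v : {ffun 'I_n -> bool}) (b : bool) :=
  (\sum_(l < n | fresh l && v l) c l - (if b then \sum_(l < n | fresh l) c l else 0)) != 0.
have -> : slice_support k c = [set t : R | P [ffun l : 'I_n => t < frechet k l.+1] (t < 0)].
  have sliceP t : P [ffun l : 'I_n => t < frechet k l.+1] (t < 0) = (slice k t c != 0).
    by rewrite /P /slice; do 3 f_equal; apply: eq_bigl => l; rewrite ffunE.
  by apply/seteqP; split => t; rewrite /slice_support /= sliceP.
exact: measurable_ffun_lt.
Qed.

Definition support_bound n := \sum_(l < n) d (e l.+1) (e 0).

Lemma support_bound_ge0 n : 0 <= support_bound n.
Proof. by apply: sumr_ge0 => l _; apply: d_ge0. Qed.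

Lemma support_bound_term n (l : 'I_n) : d (e l.+1) (e 0) <= support_bound n.
Proof. by rewrite /support_bound (bigD1 l) //= lerDl sumr_ge0. Qed.

(* Far to the left every [t < frechet k l.+1] holds and the slice telescopes to
   [0]; far to the right none holds. *)
Lemma slice_support_sub n k (c : freegrp n) :
  slice_support k c `<=` `[- support_bound n, support_bound n[%classic.
Proof.
move=> t; rewrite /slice_support /= in_itv /= => ct; apply/andP; split.
  rewrite leNgt; apply/negP => tB; move: ct; rewrite /slice.
  have t0 : t < 0 by apply: (lt_le_trans tB); rewrite oppr_le0 support_bound_ge0.
  rewrite t0 (eq_bigl (fun l : 'I_n => fresh l)) ?subrr ?eqxx // => l.
  case: (fresh l) => //=; apply: (lt_le_trans tB).
  have := frechet_bound k l.+1; rewrite ler_norml => /andP[h _].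
  by apply: le_trans h; rewrite lerN2; apply: support_bound_term.
rewrite ltNge; apply/negP => Bt; move: ct; rewrite /slice.
have t0 : ~~ (t < 0) by rewrite -leNgt (le_trans (support_bound_ge0 n)).
rewrite (negbTE t0) big_pred0 ?subrr ?eqxx // => l.
apply/negbTE; rewrite negb_and; apply/orP; right; rewrite -leNgt.
apply: le_trans Bt; apply: le_trans (support_bound_term l).
by have := frechet_bound k l.+1; rewrite ler_norml => /andP[_ h].
Qed.

Definition slice_measure n k (c : freegrp n) : R :=
  fine (lebesgue_measure (slice_support k c)).

Lemma slice_measureE n k (c : freegrp n) :
  lebesgue_measure (slice_support k c) = (slice_measure k c)%:E.
Proof.
rewrite /slice_measure fineK // ge0_fin_numE ?measure_ge0 //.
apply: (le_lt_trans (le_lebesgue_measure (@measurable_slice_support _ k c)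
  (measurable_itv _) (@slice_support_sub _ k c))).
by rewrite lebesgue_measure_itv /=; case: ifP => _; rewrite ?ltry.
Qed.

Lemma slice_measure_ge0 n k (c : freegrp n) : 0 <= slice_measure k c.
Proof. by rewrite -lee_fin -slice_measureE measure_ge0. Qed.

Lemma slice_measure_le n k (c : freegrp n) : slice_measure k c <= 2 * support_bound n.
Proof.
rewrite -lee_fin -slice_measureE.
apply: (le_trans (le_lebesgue_measure (@measurable_slice_support _ k c)
  (measurable_itv _) (@slice_support_sub _ k c))).
rewrite lebesgue_measure_itv /=; case: ifP => _; last first.
  by rewrite lee_fin mulr_ge0 ?support_bound_ge0.
by rewrite -EFinD lee_fin opprK; lra.
Qed.

Lemma slice_measureD n k (c c' : freegrp n) :
  slice_measure k (c + c') <= slice_measure k c + slice_measure k c'.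
Proof.
rewrite -lee_fin EFinD -!slice_measureE.
have mc := @measurable_slice_support _ k c; have mc' := @measurable_slice_support _ k c'.
apply: le_trans (measureU2 lebesgue_measure mc mc').
apply: le_lebesgue_measure; [exact: measurable_slice_support | exact: measurableU | move=> t].
rewrite /slice_support /= (sub_morphD (@sliceB n k t)) => cc't.
by case: (eqVneq (slice k t c) 0) => [c0|]; [right; rewrite c0 add0r in cc't | left].
Qed.

Lemma slice_measureN n k (c : freegrp n) : slice_measure k (- c) = slice_measure k c.
Proof.
rewrite /slice_measure /slice_support.
by under eq_set do rewrite (sub_morphN (@sliceB n k _)) oppr_eq0.
Qed.

Lemma slice_measure0 n k : slice_measure k (0 : freegrp n) = 0.
Proof.
rewrite /slice_measure /slice_support.
by under eq_set do rewrite (sub_morph0 (@sliceB n k _)) eqxx; rewrite set_false measure0.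
Qed.

Definition point n i : freegrp n :=
  [ffun l : 'I_n => ((first_occ i != 0%N) && (val l == (first_occ i).-1) : nat)%:R].

Lemma point0 n : point n 0 = 0.
Proof. by apply/ffunP => l; rewrite !ffunE first_occ0. Qed.

Lemma slice_point n k t i : (i <= n)%N ->
  slice k t (point n i) = ((t < frechet k i)%R : nat)%:R - ((t < 0)%R : nat)%:R.
Proof.
move=> i_le_n; case: (posnP (first_occ i)) => [fi0|fi_gt0].
  have -> : point n i = 0 by apply/ffunP => l; rewrite !ffunE fi0.
  by rewrite (sub_morph0 (@sliceB n k t)) -frechet_first_occ fi0 frechet0 subrr.
have fi_lt : ((first_occ i).-1 < n)%N.
  by case: (first_occP i) => _ fi_le _; rewrite prednK //; apply: leq_trans fi_le i_le_n.
pose s := Ordinal fi_lt.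
have fresh_s : fresh s by rewrite /fresh /= prednK // first_occ_idem.
have single (P : pred 'I_n) : \sum_(l < n | P l) point n i l = if P s then 1 else 0.
  rewrite big_mkcond (bigD1 s) //= big1 => [|l ls].
    by rewrite addr0 ffunE eqxx -lt0n fi_gt0.
  rewrite ffunE; case: ifP => // _.
  suff -> : (val l == (first_occ i).-1) = false by rewrite andbF.
  by apply/negbTE; apply: contra ls => /eqP ls_eq; apply/eqP/val_inj.
rewrite /slice !single /= fresh_s /= prednK // frechet_first_occ.
by case: (t < frechet k i); case: (t < 0).
Qed.

Lemma slice_pointB n k t i j : (i <= n)%N -> (j <= n)%N ->
  slice k t (point n i - point n j) =
  ((t < frechet k i)%R : nat)%:R - ((t < frechet k j)%R : nat)%:R.
Proof. by move=> i_le j_le; rewrite sliceB !slice_point //; ring. Qed.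

Lemma slice_measure_pointB n k i j : (i <= n)%N -> (j <= n)%N ->
  slice_measure k (point n i - point n j) = `|frechet k i - frechet k j|.
Proof.
move=> i_le j_le.
wlog ji : i j i_le j_le / frechet k j <= frechet k i.
  move=> hw; case: (leP (frechet k j) (frechet k i)) => [|/ltW ij]; first exact: hw.
  by rewrite -slice_measureN opprB distrC; apply: hw.
rewrite /slice_measure; suff -> : slice_support k (point n i - point n j) =
    `[frechet k j, frechet k i[%classic.
  rewrite lebesgue_measure_itv /= lte_fin ger0_norm ?subr_ge0 //.
  case: ltP => //= ij; suff -> : frechet k i = frechet k j by rewrite subrr.
  exact/le_anti/andP.
apply/seteqP; split => t; rewrite /slice_support /= slice_pointB // in_itv /=.
- by case: ltP => ti; case: ltP => tj //=; rewrite ?subrr ?eqxx // => _; lra.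
- by case/andP => jt ti; rewrite ti ltNge jt /= subr0 oner_neq0.
Qed.

Lemma slice_measure_gt0 n (c : freegrp n) (l : 'I_n) :
  fresh l -> c l != 0 -> 0 < slice_measure l.+1 c.
Proof.
move=> fresh_l cl.
set dl := d (e 0) (e l.+1).
have dl_gt0 : 0 < dl.
  by rewrite lt_def d_ge0 andbT; apply/eqP => /d_eq0/esym; exact: fresh_neq0.
(* Just to the right of [- dl = frechet l.+1 l.+1] only coordinate [l] is cut. *)
pose mu := \big[Num.min/dl]_(l' : 'I_n | fresh l' && (l' != l)) d (e l'.+1) (e l.+1).
have mu_gt0 : 0 < mu.
  apply: lt_bigmin => // l' /andP[fresh_l' l'l].
  rewrite lt_def d_ge0 andbT; apply/eqP => /d_eq0 el'l.
  by move/eqP: l'l; apply; apply: val_inj; exact: fresh_inj.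
have mu_le : mu <= dl by apply: bigmin_le_id.
have sub : `[- dl, - dl + mu[%classic `<=` slice_support l.+1 c.
  move=> t; rewrite /= in_itv /= => /andP[dl_t t_mu].
  have t0 : t < 0 by lra.
  rewrite /slice_support /slice /= t0.
  rewrite (eq_bigl (fun l' : 'I_n => fresh l' && (l' != l))) => [|l'].
    by rewrite (bigD1 l fresh_l) /= [c l + _]addrC opprD addrA subrr sub0r oppr_eq0.
  case: (eqVneq l' l) => [->|l'l]; first by rewrite /frechet d_xx sub0r ltNge dl_t andbF.
  rewrite andbT; case: (boolP (fresh l')) => //= fresh_l'.
  have : mu <= d (e l'.+1) (e l.+1) by apply: bigmin_le_cond; rewrite fresh_l' l'l.
  rewrite /frechet -/dl; lra.
have := le_lebesgue_measure (measurable_itv _) (@measurable_slice_support _ l.+1 c) sub.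
rewrite slice_measureE lebesgue_measure_itv /= lte_fin ltrDl mu_gt0 /= lee_fin.
by apply: lt_le_trans; rewrite addrAC subrr add0r.
Qed.

Definition extend n (c : freegrp n) : freegrp n.+1 :=
  [ffun l : 'I_n.+1 => (if (insub (val l) : option 'I_n) is Some l' then c l' else 0) : 'Z_m].

Lemma extend_widen n (c : freegrp n) (l : 'I_n) : extend c (widen_ord (leqnSn n) l) = c l.
Proof. by rewrite ffunE /= valK. Qed.

Lemma extend_sum n (c : freegrp n) (P : pred nat) :
  \sum_(l < n.+1 | P l) extend c l = \sum_(l < n | P l) c l.
Proof.
rewrite big_mkcond big_ord_recr /= ffunE insubN ?ltnn // if_same addr0 [RHS]big_mkcond.
by apply: eq_bigr => l _; rewrite extend_widen.
Qed.

Lemma extendB n : {morph @extend n : c c' / c - c'}.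
Proof.
move=> c c'; apply/ffunP => l; rewrite !ffunE.
by case: (insub (val l) : option 'I_n) => [l'|]; rewrite ?ffunE ?subrr.
Qed.

Lemma slice_extend n k t (c : freegrp n) : slice k t (extend c) = slice k t c.
Proof. by rewrite /slice (extend_sum c (fun l => fresh l && (t < frechet k l.+1))) extend_sum. Qed.

Lemma slice_measure_extend n k (c : freegrp n) : slice_measure k (extend c) = slice_measure k c.
Proof. by rewrite /slice_measure /slice_support; under eq_set do rewrite slice_extend. Qed.

Lemma extend_point n i : (i <= n)%N -> extend (point n i) = point n.+1 i.
Proof.
move=> i_le; apply/ffunP => l; rewrite !ffunE.
case: insubP => [l' _ ll'|l_n]; first by rewrite ffunE ll'.
case: (posnP (first_occ i)) => [->|fi_gt0] //.
have fi_le : (first_occ i <= n)%N.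
  by case: (first_occP i) => _ fi_le _; exact: leq_trans fi_le i_le.
suff -> : (val l == (first_occ i).-1) = false by rewrite andbF.
have : ~~ (val l < n)%N := l_n.
by case: eqP => //; lia.
Qed.

(* The slice measures do not see coordinates that are not fresh, and points
   have no such coordinates; [stale] makes the value below definite anyway. *)
Definition stale n (c : freegrp n) : bool := [exists l : 'I_n, ~~ fresh l && (c l != 0)].

Lemma staleD n (c c' : freegrp n) : stale (c + c') -> stale c || stale c'.
Proof.
move/existsP => [l /andP[not_fresh]]; rewrite ffunE => cc'l.
case: (eqVneq (c l) 0) => [cl0|cl].
  apply/orP; right; apply/existsP; exists l; rewrite not_fresh /=.
  by rewrite cl0 add0r in cc'l.
by apply/orP; left; apply/existsP; exists l; rewrite not_fresh cl.
Qed.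

Lemma staleN n (c : freegrp n) : stale (- c) = stale c.
Proof. by apply: eq_existsb => l; rewrite ffunE oppr_eq0. Qed.

Lemma stale0 n : stale (0 : freegrp n) = false.
Proof. by apply/existsP => -[l]; rewrite ffunE eqxx andbF. Qed.

Lemma stale_pointB n i j : stale (point n i - point n j) = false.
Proof.
suff point_fresh k (l : 'I_n) : ~~ fresh l -> point n k l = 0.
  apply/existsP => -[l /andP[not_fresh]].
  by rewrite freegrpB !(point_fresh _ _ not_fresh) subrr eqxx.
move=> not_fresh; rewrite ffunE; case: (boolP (first_occ k != 0%N)) => //= fk_neq0.
case: eqP => //= l_fk; case/negP: not_fresh.
by rewrite /fresh l_fk prednK ?lt0n // first_occ_idem.
Qed.

Lemma stale_extend n (c : freegrp n) : stale (extend c) = stale c.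
Proof.
apply/existsP/existsP => -[l /andP[not_fresh cl]].
  move: cl; rewrite ffunE; case: insubP => [l' _ ll'|]; last by rewrite eqxx.
  by move=> cl'; exists l'; rewrite cl' andbT ll'.
by exists (widen_ord (leqnSn n) l); rewrite extend_widen cl andbT.
Qed.

Lemma freegrp_exp n (c : freegrp n) : (1 < m)%N -> c *+ m = 0.
Proof.
move=> m_gt1; apply/ffunP => l; rewrite ffunMnE ffunE -mulr_natr.
by rewrite (_ : m%:R = 0 :> 'Z_m) ?mulr0 // pchar_Zp.
Qed.

Definition frechet_value n (c : freegrp n) := sup (range (fun k => slice_measure k c)).

Lemma frechet_value_ub n (c : freegrp n) k : slice_measure k c <= frechet_value c.
Proof.
apply: sup_upper_bound; last by exists k.
split; first by exists (slice_measure 0 c), 0%N.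
by exists (2 * support_bound n) => y [k' _ <-]; exact: slice_measure_le.
Qed.

Lemma frechet_value_le n (c : freegrp n) x :
  (forall k, slice_measure k c <= x) -> frechet_value c <= x.
Proof.
by move=> cx; apply: ge_sup => [|y [k _ <-]]; [exists (slice_measure 0 c), 0%N | exact: cx].
Qed.

Lemma frechet_value_ge0 n (c : freegrp n) : 0 <= frechet_value c.
Proof. exact: le_trans (slice_measure_ge0 0 c) (frechet_value_ub c 0). Qed.

Lemma frechet_value_extend n (c : freegrp n) : frechet_value (extend c) = frechet_value c.
Proof. by rewrite /frechet_value; under eq_fun do rewrite slice_measure_extend. Qed.

Lemma frechet_value_pointB n i j : (i <= n)%N -> (j <= n)%N ->
  frechet_value (point n i - point n j) = d (e i) (e j).
Proof.
move=> i_le j_le; apply/le_anti/andP; split.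
  apply: frechet_value_le => k; rewrite slice_measure_pointB //.
  have -> : frechet k i - frechet k j = d (e i) (e k) - d (e j) (e k).
    by rewrite /frechet; ring.
  rewrite ler_norml; have h1 := d_tri (e i) (e j) (e k).
  have h2 := d_tri (e j) (e i) (e k); rewrite (d_sym (e j) (e i)) in h2.
  apply/andP; split; lra.
apply: le_trans (frechet_value_ub _ j); rewrite slice_measure_pointB //.
have -> : frechet j i - frechet j j = d (e i) (e j) by rewrite /frechet d_xx; ring.
by rewrite ger0_norm.
Qed.

Lemma frechet_value_gt0 n (c : freegrp n) : c != 0 -> ~~ stale c -> 0 < frechet_value c.
Proof.
move=> c_neq0 not_stale; have [l cl] : exists l, c l != 0.
  apply/existsP; apply: contraR c_neq0 => /existsPn c0; apply/eqP/ffunP => l.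
  by rewrite ffunE; move/negPn/eqP: (c0 l).
have fresh_l : fresh l.
  by apply: contraNT not_stale => not_fresh; apply/existsP; exists l; rewrite not_fresh.
exact: lt_le_trans (slice_measure_gt0 fresh_l cl) (frechet_value_ub c l.+1).
Qed.

Definition free_value n (c : freegrp n) := frechet_value c + (stale c)%:R.

Lemma free_value_value n : is_value (@free_value n).
Proof.
split; [|split; [|split]].
- by move=> c; rewrite /free_value addr_ge0 ?frechet_value_ge0.
- move=> c; split; last first.
    move=> ->; rewrite /free_value stale0 addr0; apply/le_anti.
    by rewrite frechet_value_ge0 andbT frechet_value_le // => k; rewrite slice_measure0.
  apply: contra_eq => c_neq0; rewrite /free_value; have := frechet_value_ge0 c.
  case: (boolP (stale c)) => [_|not_stale]; first by rewrite /=; lra.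
  by have := frechet_value_gt0 c_neq0 not_stale; rewrite /=; lra.
- move=> c; rewrite /free_value /frechet_value staleN.
  by under eq_fun do rewrite slice_measureN.
- move=> c c'; rewrite /free_value.
  have : frechet_value (c + c') <= frechet_value c + frechet_value c'.
    apply: frechet_value_le => k; apply: le_trans (slice_measureD k c c') _.
    by apply: lerD; exact: frechet_value_ub.
  have : (stale (c + c'))%:R <= (stale c)%:R + (stale c')%:R :> R.
    case: (boolP (stale (c + c'))) => [/staleD|]; last by rewrite /= addr_ge0.
    by rewrite -natrD ler_nat; case: (stale c); case: (stale c').
  lra.
Qed.

End FrechetCoding.

Section SequenceEmbedding.
Variables (R : realType) (r : \bar R) (N : nat) (G : zmodType) (p : G -> R).
Hypotheses (r_gt0 : (0 < r)%E) (N_neq1 : N <> 1%N) (pGr : is_Gr r N p).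
Variables (X : Type) (d : X -> X -> R).
Hypotheses (hd : is_metric d) (d_le_r : forall x y : X, ((d x y)%:E <= r)%E).

Lemma sequence_embedding (e : nat -> X) :
  exists gam : nat -> G, forall i j, p (gam i - gam j) = d (e i) (e j).
Proof.
have [[pcomp [pv [_ [_ [pr _]]]]] [pG2 _]] := pGr.
(* For [N = 0] any exponent will do; [1 < m] matters since ['Z_1] is [Z/2]. *)
pose m := if N == 0%N then 2%N else N.
have m_gt1 : (1 < m)%N by rewrite /m; case: eqP => // N0; move: N_neq1 N0; case: N => [|[|]].
have expN n : exponent_cond (freegrp m n) N.
  move=> N0 c; have mN : m = N by rewrite /m (negbTE N0).
  by rewrite -mN freegrp_exp.
pose F n : finZmodType := freegrp m n.
pose V n (c : F n) := truncr r (free_value d e c).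
apply: (@tower_embedding _ _ _ _ _ r_gt0 pv pr pG2 pcomp F V (fun n => @extend m n)
  (fun n => point e m n)).
- by move=> n; apply: truncr_value => //; exact: free_value_value.
- by move=> n c; apply: truncr_bound; case: r r_gt0.
- exact: expN.
- by move=> n; exact: extendB.
- by move=> n c; rewrite /V /free_value frechet_value_extend stale_extend.
- by move=> n i; exact: extend_point.
- by move=> n; exact: point0.
- move=> n i j i_le j_le.
  by rewrite /V /free_value (frechet_value_pointB e m hd) // stale_pointB addr0 truncr_id.
Qed.

End SequenceEmbedding.

Section DenseExtension.
Variables (R : realType) (G : zmodType) (p : G -> R) (X : Type) (d : X -> X -> R).
Hypotheses (pv : is_value p) (pcomp : complete_value p) (hd : is_metric d).
Variables (e : nat -> X) (gam : nat -> G).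
Hypotheses (e_dense : forall x eps, 0 < eps -> exists k, d x (e k) < eps)
  (gam_iso : forall i j, p (gam i - gam j) = d (e i) (e j)).

Let d_sym x y : d x y = d y x. Proof. by case: hd => _ [_ [h _]]. Qed.
Let d_tri x y z : d x z <= d x y + d y z. Proof. by case: hd => _ [_ [_ h]]. Qed.

Let d_dist a b x y : `|d a b - d x y| <= d x a + d y b.
Proof.
have := d_tri a x b; have := d_tri x y b; have := d_tri x a y; have := d_tri a b y.
rewrite ler_norml (d_sym a x) (d_sym b y) => *; apply/andP; split; lra.
Qed.

Lemma isometry_extension : exists f : X -> G, forall x y, p (f x - f y) = d x y.
Proof.
have near_ex x : exists k : nat -> nat, forall n, d x (e (k n)) < 2 ^- n.
  by have [k k_near] := choice (fun n => e_dense x (halfpow_gt0 R n)); exists k.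
have [near near_lt] := choice near_ex.
have near_cvg x : exists l, cvg_value p (gam \o near x) l.
  apply: (cvg_value_halfpow pv pcomp (ltr0n R 2)) => n k nk /=.
  rewrite gam_iso; have := d_tri (e (near x k)) x (e (near x n)).
  have := near_lt x n; have := near_lt x k; rewrite d_sym.
  have := halfpow_le R nk; lra.
have [f f_lim] := choice near_cvg.
exists f => x y; apply: value_dist_approx => // eps eps0.
have [Mx hMx] := f_lim x eps eps0; have [My hMy] := f_lim y eps eps0.
have [M hM] := halfpow_small (divr_gt0 eps0 (ltr0n R 2)).
pose n := (Mx + My + M)%N.
exists (gam (near x n)), (gam (near y n)); split.
- by apply: hMx; rewrite /n; lia.
- by apply: hMy; rewrite /n; lia.
- rewrite gam_iso; apply: le_lt_trans (d_dist _ _ x y) _.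
  have := near_lt x n; have := near_lt y n; have := hM n (ltac:(rewrite /n; lia)); lra.
Qed.

End DenseExtension.

Lemma separable_dense_sequence (R : realType) (X : Type) (d : X -> X -> R) (x0 : X) :
  separable_metric d -> exists e : nat -> X, forall x eps, 0 < eps -> exists k, d x (e k) < eps.
Proof.
move=> [D [/countable_injP [f f_inj] D_dense]].
pose e k := if pselect (exists x, D x /\ f x = k) is left h then sval (cid h) else x0.
exists e => x eps eps0; have [y [Dy xy]] := D_dense x eps eps0.
exists (f y); rewrite /e; case: pselect => [h|]; last by case; exists y.
by case: (cid h) => z [Dz fz] /=; rewrite (f_inj z y) ?inE.
Qed.

Theorem theorem5p12 (R : realType) (r : \bar R) (N : nat)
    (hr : r = 1%E \/ r = +oo%E) (hN : N <> 1%N)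
    (G : zmodType) (p : G -> R) (hG : is_Gr r N p)
    (X : Type) (d : X -> X -> R) (hd : is_metric d) (hsep : separable_metric d)
    (hdiam : forall x y : X, ((d x y)%:E <= r)%E) :
  exists f : X -> G, forall x y : X, p (f x - f y) = d x y.
Proof.
have r_gt0 : (0 < r)%E by case: hr => ->.
have [[pcomp [pv _]] _] := hG.
case: (pselect (inhabited X)) => [[x0]|X0]; last first.
  by exists (fun=> 0) => x; case: (X0 (inhabits x)).
have [e e_dense] := separable_dense_sequence x0 hsep.
have [gam gam_iso] := sequence_embedding r_gt0 hN hG hd hdiam e.
exact: (isometry_extension pv pcomp hd e_dense gam_iso).
Qed.
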